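(* Let $(R,+,\cdot)$ be a finite simple additively idempotent semiring with $|R|>2$ and let $(M,+)$ be a finite idempotent sub-irreducible $R$-semimodule. Then: (1) if $\infty_R x\ne\infty_M$ for some $x\in M$, then $(M,+)$ has a neutral element $0_M$, $x=0_M$, and $R0_M=\{0_M\}$; (2) $\infty_R$ is right absorbing if and only if $R\infty_M=\{\infty_M\}$; (3) if $\infty_R$ is not left absorbing then $(M,+)$ has a neutral element $0_M$ and $R0_M=\{0_M\}$; (4) if $\infty_R$ is left absorbing, $(M,+)$ is quotient-irreducible, $|M|>2$, and $(M,+)$ has a neutral element $0_M$, then $R0_M=M$.
   Context: A semiring is a nonempty set with a commutative semigroup operation $+$ and a semigroup operation $\cdot$ satisfying both distributive laws; simple if its only congruences are the identity and the full relation; additively idempotent if $r+r=r$, with order $x\le y:\Leftrightarrow x+y=y$ and greatest element $\infty_R=\sum_{r\in R}r$. An element $r$ is right absorbing if $sr=r$ for all $s\in R$, left absorbing if $rs=r$ for all $s$. An $R$-semimodule is a commutative semigroup $(M,+)$ with an action $R\times M\to M$ satisfying $r(sx)=(rs)x$, $(r+s)x=rx+sx$, $r(x+y)=rx+ry$; idempotent if $x+x=x$, with order defined likewise and greatest element $\infty_M$. $Rx=\{rx:r\in R\}$. A subsemimodule is a subsemigroup closed under the action; a semimodule congruence is an equivalence compatible with $+$ and the action. $M$ is quasitrivial if $rx=sx$ for all $r,s,x$; id-quasitrivial if $rx=x$ for all $r,x$; sub-irreducible if not quasitrivial and all proper subsemimodules are id-quasitrivial; quotient-irreducible if not quasitrivial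 and its only congruences are the identity and $M\times M$. *)

From mathcomp Require Import all_boot.
Set Implicit Arguments. Unset Strict Implicit. Unset Printing Implicit Defensive.

(* Semirings in the sense of the paper: no 0 or 1 required. *)
Definition is_semiring (R : Type) (addR mulR : R -> R -> R) : Prop :=
  [/\ associative addR, commutative addR, associative mulR,
      left_distributive mulR addR & right_distributive mulR addR].

Definition add_idempotent (T : Type) (add : T -> T -> T) : Prop :=
  forall x, add x x = x.

Definition fsum (T : Type) (add : T -> T -> T) (s : seq T) : option T :=
  match s with
  | [::] => None
  | x :: s' => Some (foldr add x s')
  end.

(* infty_T = sum of all elements of the finite type T. *)
Definition sum_all (T : finType) (add : T -> T -> T) : option T :=
  fsum add (enum T).

Definition is_equiv (T : Type) (e : T -> T -> Prop) : Prop :=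
  (forall x, e x x) /\ (forall x y, e x y -> e y x) /\
  (forall x y z, e x y -> e y z -> e x z).

Definition semiring_congruence (R : Type) (addR mulR : R -> R -> R)
  (e : R -> R -> Prop) : Prop :=
  is_equiv e /\
  (forall a b c d, e a b -> e c d -> e (addR a c) (addR b d)) /\
  (forall a b c d, e a b -> e c d -> e (mulR a c) (mulR b d)).

Definition simple_semiring (R : Type) (addR mulR : R -> R -> R) : Prop :=
  forall e, semiring_congruence addR mulR e ->
    (forall x y, e x y <-> x = y) \/ (forall x y, e x y).

Definition is_semimodule (R M : Type) (addR mulR : R -> R -> R)
  (addM : M -> M -> M) (act : R -> M -> M) : Prop :=
  [/\ associative addM, commutative addM,
      (forall r s x, act r (act s x) = act (mulR r s) x),
      (forall r s x, act (addR r s) x = addM (act r x) (act s x)) &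
      (forall r x y, act r (addM x y) = addM (act r x) (act r y))].

Definition quasitrivial (R M : Type) (act : R -> M -> M) : Prop :=
  forall r s x, act r x = act s x.

Definition is_subsemimodule (R M : finType) (addM : M -> M -> M)
  (act : R -> M -> M) (S : {set M}) : Prop :=
  (forall x y, x \in S -> y \in S -> addM x y \in S) /\
  (forall r x, x \in S -> act r x \in S).

Definition id_quasitrivial_on (R M : finType) (act : R -> M -> M)
  (S : {set M}) : Prop :=
  forall r x, x \in S -> act r x = x.

Definition sub_irreducible (R M : finType) (addM : M -> M -> M)
  (act : R -> M -> M) : Prop :=
  ~ quasitrivial act /\
  forall S : {set M}, is_subsemimodule addM act S -> S != [set: M] ->
    id_quasitrivial_on act S.

Definition semimodule_congruence (R M : Type) (addM : M -> M -> M)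
  (act : R -> M -> M) (e : M -> M -> Prop) : Prop :=
  is_equiv e /\
  (forall a b c d, e a b -> e c d -> e (addM a c) (addM b d)) /\
  (forall r a b, e a b -> e (act r a) (act r b)).

Definition quotient_irreducible (R M : Type) (addM : M -> M -> M)
  (act : R -> M -> M) : Prop :=
  ~ quasitrivial act /\
  forall e, semimodule_congruence addM act e ->
    (forall x y, e x y <-> x = y) \/ (forall x y, e x y).

Definition neutral (M : Type) (addM : M -> M -> M) (z : M) : Prop :=
  forall x, addM z x = x.

Definition orbitR (R M : finType) (act : R -> M -> M) (x : M) : {set M} :=
  [set act r x | r : R].

Definition right_absorbing (R : Type) (mulR : R -> R -> R) (a : R) : Prop :=
  forall s, mulR s a = a.
Definition left_absorbing (R : Type) (mulR : R -> R -> R) (a : R) : Prop :=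
  forall s, mulR a s = a.

From mathcomp Require Import all_boot.

Set Implicit Arguments.
Unset Strict Implicit.
Unset Printing Implicit Defensive.

(* Simplicity of R together with |R| > 2 makes the action faithful and
   forbids R from acting constantly on an orbit that it fixes pointwise.  If no
   orbit were all of M, sub-irreducibility would make R act as a right
   projection, so M = Ry and hence infR x = infM whenever Rx = M.  For x with
   infR x <> infM the orbit Rx is proper, so R acts constantly on x; the proper
   submodule {x} u {w | Rw = {infR x}} then shows x is fixed, and x + M is a
   submodule that, unless x is neutral, is proper and hence collapses onto
   x + infM = infM, contradicting infR x <> infM.  Parts (2)-(4) follow from
   this dichotomy, (4) using the congruence "same image under infR". *)

Section IdempotentSemigroup.

Variables (T : finType) (add : T -> T -> T).
Hypotheses (addA : associative add) (addC : commutative add)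
  (addI : add_idempotent add).

Lemma foldr_add_absorbs (s : seq T) (x r : T) :
  r \in x :: s -> add (foldr add x s) r = foldr add x s.
Proof.
elim: s x r => [|y s IH] x r /=; first by rewrite inE => /eqP ->; rewrite addI.
rewrite !inE -(addA y); case/orP=> [/eqP ->|]; first by rewrite IH // inE eqxx.
case/orP=> [/eqP ->|Hr]; first by rewrite (addC _ y) (addA y) addI.
by rewrite IH // inE Hr orbT.
Qed.

Lemma sum_all_absorbs (t : T) : sum_all add = Some t -> forall r, add t r = t.
Proof.
rewrite /sum_all /fsum; have : forall r, r \in enum T by move=> r; rewrite mem_enum.
by case: (enum T) => [|x s] //= Hm [<-] r; apply: foldr_add_absorbs.
Qed.

Lemma card_le2_neutral_or_absorbing :
  (forall c, (forall r, add r c = r) \/ (forall r, add r c = c)) -> #|T| <= 2.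
Proof.
move=> cls; pose B := [set c | [forall r, add r c == r]].
have cardB : #|B| <= 1.
  apply/card_le1P => x; rewrite inE => /forallP Hx y; rewrite !inE.
  apply/forallP/eqP => [Hy|->//].
  by rewrite -(eqP (Hx y)) addC (eqP (Hy x)).
have absorbing c : c \notin B -> forall r, add r c = c.
  rewrite inE => /forallP Hc; case: (cls c) => // Hn.
  by case: Hc => r; rewrite Hn.
have cardCB : #|~: B| <= 1.
  apply/card_le1P => x; rewrite inE => Bx y; rewrite inE.
  apply/idP/eqP => [By|->//].
  by rewrite -(absorbing x Bx y) addC (absorbing y By).
by rewrite -(cardsC B) -[2]/(1 + 1); apply: leq_add.
Qed.

End IdempotentSemigroup.

Section SimpleIdempotentSemiring.

Variables (R : finType) (addR mulR : R -> R -> R).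
Hypotheses (HR : is_semiring addR mulR) (HRsimple : simple_semiring addR mulR)
  (HRidem : add_idempotent addR) (HRcard : 2 < #|R|).

Lemma semiring_not_right_projection : ~ (forall r s, mulR r s = s).
Proof.
move=> Hm; case: HR => addRA addRC _ _ _.
suff: #|R| <= 2 by rewrite leqNgt HRcard.
apply: (card_le2_neutral_or_absorbing addRC) => c.
have addRDr u v : addR (addR u v) c = addR (addR u c) (addR v c).
  by rewrite -{1}(HRidem c) !addRA; congr addR; rewrite -!addRA (addRC v).
have cong : semiring_congruence addR mulR (fun r s => addR r c = addR s c).
  split; [split; [by [] | split; [by [] | by move=> x y z -> ->]] | split].
    by move=> a b a' b' H1 H2; rewrite addRDr H1 H2 -addRDr.
  by move=> a b a' b' _ H2; rewrite !Hm.
case: (HRsimple cong) => H; [left | right] => r.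
  by apply/(H _ _); rewrite -addRA HRidem.
by rewrite (H r c) HRidem.
Qed.

Variables (M : finType) (addM : M -> M -> M) (act : R -> M -> M).
Hypotheses (HM : is_semimodule addR mulR addM act) (HMidem : add_idempotent addM)
  (HMnq : ~ quasitrivial act).

Let addMA : associative addM. Proof. by case: HM. Qed.
Let addMC : commutative addM. Proof. by case: HM. Qed.
Let actA r s x : act r (act s x) = act (mulR r s) x. Proof. by case: HM. Qed.
Let actDl r s x : act (addR r s) x = addM (act r x) (act s x).
Proof. by case: HM. Qed.
Let actDr r x y : act r (addM x y) = addM (act r x) (act r y).
Proof. by case: HM. Qed.

Lemma act_inj r s : (forall x, act r x = act s x) -> r = s.
Proof.
have cong : semiring_congruence addR mulR (fun r s => forall x, act r x = act s x).
  split; [split; [by [] | split] | split].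
  - by move=> x y H z; rewrite H.
  - by move=> x y w H1 H2 z; rewrite H1 H2.
  - by move=> a b c d H1 H2 z; rewrite !actDl H1 H2.
  - by move=> a b c d H1 H2 z; rewrite -!actA H2 H1.
case: (HRsimple cong) => H; first by move/H.
by move=> _; case: HMnq => r' s' x; apply: (H r' s').
Qed.

Lemma act_const_of_orbit_fixed x :
  (forall r s, act r (act s x) = act s x) -> forall r s, act r x = act s x.
Proof.
move=> Hfix.
have cong : semiring_congruence addR mulR (fun r s => act r x = act s x).
  split; [split; [by [] | split; [by [] | by move=> a b c -> ->]] | split].
    by move=> a b c d H1 H2; rewrite !actDl H1 H2.
  by move=> a b c d H1 H2; rewrite -!actA !Hfix.
case: (HRsimple cong) => H; last by move=> r s; apply: H.
case: semiring_not_right_projection => r s.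
by apply/(H _ _); rewrite -actA Hfix.
Qed.

Lemma mem_orbitR r x : act r x \in orbitR act x.
Proof. by apply/imsetP; exists r. Qed.

Lemma orbitR_subsemimodule x : is_subsemimodule addM act (orbitR act x).
Proof.
split=> [u v /imsetP [r _ ->] /imsetP [s _ ->]|r u /imsetP [s _ ->]].
  by rewrite -actDl mem_orbitR.
by rewrite actA mem_orbitR.
Qed.

Lemma orbitR_fixed x : (forall r, act r x = x) -> orbitR act x = [set x].
Proof.
move=> Hx; apply/setP => w; rewrite in_set1.
apply/imsetP/eqP => [[r _ ->]|->]; first by rewrite Hx.
have /card_gt0P [r _] : 0 < #|R| by apply: leq_trans HRcard.
by exists r; rewrite ?Hx.
Qed.

Hypothesis HMsub : forall S : {set M}, is_subsemimodule addM act S ->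
  S != [set: M] -> id_quasitrivial_on act S.

Lemma proper_orbitR_act_const x :
  orbitR act x != [set: M] -> forall r s, act r x = act s x.
Proof.
move=> Hx; apply: act_const_of_orbit_fixed => r s.
by apply: (HMsub (orbitR_subsemimodule x) Hx); apply: mem_orbitR.
Qed.

Lemma exists_orbitR_setT : exists y, orbitR act y = [set: M].
Proof.
case: (boolP [exists y, orbitR act y == [set: M]]) => [/existsP [y /eqP]|Hn].
  by exists y.
case: semiring_not_right_projection => r s; apply: act_inj => x.
rewrite -actA (HMsub (orbitR_subsemimodule x)) ?mem_orbitR //.
by apply: contraNneq Hn => Hx; apply/existsP; exists x; rewrite Hx.
Qed.

Variables (infR : R) (infM : M).
Hypotheses (HinfR : sum_all addR = Some infR) (HinfM : sum_all addM = Some infM).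

Let addR_infR r : addR infR r = infR.
Proof. by case: HR => addRA addRC _ _ _; apply: sum_all_absorbs. Qed.
Let addM_infM x : addM infM x = infM.
Proof. exact: sum_all_absorbs. Qed.

Lemma act_infR_top r x : act r x = infM -> act infR x = infM.
Proof. by move=> H; rewrite -(addR_infR r) actDl H addMC addM_infM. Qed.

Lemma orbitR_setT_act_infR y : orbitR act y = [set: M] -> act infR y = infM.
Proof.
move=> Hy; have : infM \in orbitR act y by rewrite Hy inE.
by case/imsetP => r _ /esym /act_infR_top.
Qed.

Lemma act_infR_lt_top_fixed x : act infR x <> infM -> forall r, act r x = x.
Proof.
move=> Hx.
have Rx_proper : orbitR act x != [set: M].
  by apply: contra_not_neq Hx => /orbitR_setT_act_infR.
pose b := act infR x.
have Hb r : act r x = b by apply: proper_orbitR_act_const.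
have Hbb r : act r b = b by rewrite /b actA Hb.
pose S := [set w | (w == x) || [forall r, act r w == b]].
have b_collapse w : w \in S -> forall r, act r w = b.
  by rewrite inE => /orP [/eqP -> //|/forallP Hw] r; apply/eqP.
have HS : is_subsemimodule addM act S.
  split=> [u v /b_collapse Hu /b_collapse Hv|r u /b_collapse Hu]; rewrite inE;
    apply/orP; right; apply/forallP => s; apply/eqP.
    by rewrite actDr Hu Hv HMidem.
  by rewrite Hu Hbb.
have HSproper : S != [set: M].
  apply/negP => /eqP E; apply: HMnq => r s w.
  have /b_collapse Hw : w \in S by rewrite E inE.
  by rewrite (Hw r) (Hw s).
by move=> r; apply: (HMsub HS HSproper); rewrite inE eqxx.
Qed.

Lemma act_infR_lt_top_neutral x : act infR x <> infM -> neutral addM x.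
Proof.
move=> Hx; have fixx := act_infR_lt_top_fixed Hx.
pose U := [set addM x w | w : M].
have HU : is_subsemimodule addM act U.
  split=> [u v /imsetP [w _ ->] /imsetP [w' _ ->]|r u /imsetP [w _ ->]];
    apply/imsetP.
    exists (addM w w') => //.
    by rewrite -addMA (addMA w) (addMC w) -(addMA x) addMA HMidem.
  by exists (act r w); rewrite // actDr fixx.
case: (boolP (U == [set: M])) => [/eqP E w|HUproper].
  have : w \in U by rewrite E inE.
  by case/imsetP => w0 _ ->; rewrite addMA HMidem.
have [y Hy] := exists_orbitR_setT.
(* x + M is fixed pointwise, and every element is of the form r y *)
have addx_const z : addM x z = addM x y.
  have : z \in orbitR act y by rewrite Hy inE.
  case/imsetP => r _ ->; rewrite -{1}(fixx r) -actDr.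
  by rewrite (HMsub HU HUproper) //; apply/imsetP; exists y.
case: Hx; rewrite fixx -{1}(HMidem x) addx_const -(addx_const infM).
by rewrite addMC addM_infM.
Qed.

Lemma right_absorbing_infRP :
  right_absorbing mulR infR <-> orbitR act infM = [set infM].
Proof.
have [y Hy] := exists_orbitR_setT.
split=> [Hra|Ho s].
  by apply: orbitR_fixed => r; rewrite -(orbitR_setT_act_infR Hy) actA Hra.
have Hs : act s infM = infM by apply/set1P; rewrite -Ho mem_orbitR.
apply: act_inj => z; rewrite -actA.
case: (act infR z =P infM) => [-> //|Hz].
by rewrite (act_infR_lt_top_fixed Hz) (act_infR_lt_top_fixed Hz).
Qed.

Lemma not_left_absorbing_act_infR_lt_top :
  ~ left_absorbing mulR infR -> exists x, act infR x <> infM.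
Proof.
move=> Hnl; case: (boolP [exists x, act infR x != infM]) => [/existsP [x /eqP]|Hn].
  by exists x.
case: Hnl => s; apply: act_inj => z.
have H w : act infR w = infM.
  by apply/eqP; apply: contraNT Hn => Hw; apply/existsP; exists w.
by rewrite -actA !H.
Qed.

Lemma left_absorbing_act_infR_top :
  left_absorbing mulR infR -> quotient_irreducible addM act ->
  forall x, act infR x = infM.
Proof.
move=> Hla [_ Hq].
have cong : semimodule_congruence addM act (fun u v => act infR u = act infR v).
  split; [split; [by [] | split; [by [] | by move=> a b c -> ->]] | split].
    by move=> a b c d H1 H2; rewrite !actDr H1 H2.
  by move=> r a b H; rewrite !actA Hla.
case: (Hq _ cong) => H.
  case: HMnq => r s x.
  have E r' : act r' x = x by apply/(H _ _); rewrite actA Hla.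
  by rewrite !E.
have [y Hy] := exists_orbitR_setT.
by move=> x; rewrite -(orbitR_setT_act_infR Hy); apply: H.
Qed.

Lemma left_absorbing_orbitR_neutral :
  left_absorbing mulR infR -> quotient_irreducible addM act -> 2 < #|M| ->
  forall z, neutral addM z -> orbitR act z = [set: M].
Proof.
move=> Hla Hq HMcard z Hz.
have Hfull := left_absorbing_act_infR_top Hla Hq.
case: (boolP (orbitR act z == [set: M])) => [/eqP //|Hproper].
have Hi r : act r z = infM.
  by rewrite -(Hfull z); apply: proper_orbitR_act_const.
have Hii r : act r infM = infM by rewrite -(Hi infR) actA Hi.
pose S := [set z; infM].
have HS : is_subsemimodule addM act S.
  split=> [u v|r u]; rewrite !inE.
    by move=> /orP [/eqP ->|/eqP ->] /orP [/eqP ->|/eqP ->];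
      rewrite ?HMidem ?Hz ?addM_infM ?eqxx ?orbT.
  by move=> /orP [/eqP ->|/eqP ->]; rewrite ?Hi ?Hii eqxx orbT.
have HSproper : S != [set: M].
  apply: contraTneq HMcard => E; rewrite -cardsT -E cards2; by case: (z != infM).
have Ez : z = infM by rewrite -(Hi infR) (HMsub HS HSproper) // !inE eqxx.
case: HMnq => r s w.
have -> : w = infM by rewrite -(Hz w) Ez addM_infM.
by rewrite !Hii.
Qed.

End SimpleIdempotentSemiring.

Theorem proposition2p22
  (R M : finType) (addR mulR : R -> R -> R) (addM : M -> M -> M)
  (act : R -> M -> M)
  (HR : is_semiring addR mulR) (HRsimple : simple_semiring addR mulR)
  (HRidem : add_idempotent addR) (HRcard : 2 < #|R|)
  (HM : is_semimodule addR mulR addM act) (HMidem : add_idempotent addM)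
  (HMirr : sub_irreducible addM act)
  (infR : R) (HinfR : sum_all addR = Some infR)
  (infM : M) (HinfM : sum_all addM = Some infM) :
  (* (1) *)
  (forall x : M, act infR x <> infM ->
     exists z : M, [/\ neutral addM z, x = z & orbitR act z = [set z]]) /\
  (* (2) *)
  (right_absorbing mulR infR <-> orbitR act infM = [set infM]) /\
  (* (3) *)
  (~ left_absorbing mulR infR ->
     exists z : M, neutral addM z /\ orbitR act z = [set z]) /\
  (* (4) *)
  (left_absorbing mulR infR -> quotient_irreducible addM act -> 2 < #|M| ->
     forall z : M, neutral addM z -> orbitR act z = [set: M]).
Proof.
case: HMirr => HMnq HMsub.
have fixed := act_infR_lt_top_fixed HR HRsimple HRidem HRcard HM HMidem HMnq HMsub HinfR HinfM.
have neut := act_infR_lt_top_neutral HR HRsimple HRidem HRcard HM HMidem HMnq HMsub HinfR HinfM.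
have part1 x : act infR x <> infM ->
    exists z, [/\ neutral addM z, x = z & orbitR act z = [set z]].
  by move=> Hx; exists x; split; [exact: neut | | exact/orbitR_fixed/fixed].
split=> //; split.
  exact: (right_absorbing_infRP HR HRsimple HRidem HRcard HM HMidem HMnq HMsub HinfR HinfM).
split.
  move=> /(not_left_absorbing_act_infR_lt_top HRsimple HM HMnq infM) [x /part1].
  by case=> z [Hz _ Hoz]; exists z.
exact: (left_absorbing_orbitR_neutral HR HRsimple HRidem HRcard HM HMidem HMnq HMsub HinfR HinfM).
Qed.
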